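(* For every integer $n\ge0$ with $n\ne3$ we have $\tilde b(TP_n)\le 2^{n/4}$. Furthermore $\tilde b(TP_3)=2$.
   Context: The triangular path $TP_n$ is the graph with vertex set $[n]$ in which $i\ne j$ are adjacent iff $|i-j|\le2$; $TP_0$ is the empty graph. $\mathrm{Ind}(G)$ is the independence complex of $G$ (including the empty face), and $\tilde b(G)=\sum_{i\ge-1}\dim_{\mathbb{K}}\widetilde H_i(\mathrm{Ind}(G);\mathbb{K})$ for a fixed field $\mathbb{K}$. *)

From HB Require Import structures.
From mathcomp Require Import all_boot all_order all_algebra.
Set Implicit Arguments. Unset Strict Implicit. Unset Printing Implicit Defensive.
Import GRing.Theory Num.Theory.
Local Open Scope ring_scope.

(* A simple graph is a relation [e] on a finite vertex type [V]
   (the graphs considered are symmetric and irreflexive). *)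

(* independent sets of a graph = faces of the independence complex Ind(G),
   including the empty face *)
Definition independent (V : finType) (e : rel V) (A : {set V}) : bool :=
  [forall x in A, forall y in A, ~~ e x y].

(* faces of Ind(G) with exactly d vertices (i.e. of dimension d-1) *)
Definition faces (V : finType) (e : rel V) (d : nat) : {set {set V}} :=
  [set A : {set V} | independent e A && (#|A| == d)%N].

(* Simplicial boundary map from (d+1)-vertex faces to d-vertex faces, written
   as a matrix acting on row vectors: entry (A,B) is 0 unless B = A \ {v},
   in which case it is (-1)^(number of vertices of B below v), vertices being
   totally ordered by enum_rank. *)
Definition bdry_coef (K : fieldType) (V : finType) (A B : {set V}) : K :=
  if B \subset A then
    match [pick v in A :\: B] with
    | Some v => (-1) ^+ #|[set u in B | enum_rank u < enum_rank v]%N|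
    | None => 0
    end
  else 0.

Definition bdry (K : fieldType) (V : finType) (e : rel V) (d : nat)
  : 'M[K]_(#|faces e d.+1|, #|faces e d|) :=
  \matrix_(i, j) bdry_coef K (enum_val i) (enum_val j).

(* dim_K of the reduced homology \tilde H_{d-1}(Ind(G); K), d = number of
   vertices of the faces in that degree (d = 0 <-> degree -1, the augmented
   chain group spanned by the empty face, with zero augmentation target):
   dim ker(boundary out of C_{d-1}) - dim im(boundary into C_{d-1}). *)
Definition red_betti (K : fieldType) (V : finType) (e : rel V) (d : nat) : nat :=
  ((match d with
    | 0 => #|faces e 0|
    | d'.+1 => \rank (kermx (bdry K e d'))
    end) - \rank (bdry K e d))%N.

(* \tilde b(G) = sum over all degrees i >= -1 of dim \tilde H_i(Ind G; K);
   faces have at most #|V| vertices, so degrees i > #|V| contribute 0. *)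
Definition btilde (K : fieldType) (V : finType) (e : rel V) : nat :=
  (\sum_(d < #|V|.+2) red_betti K e d)%N.

(* The triangular path TP_n on vertex set {0,...,n-1} (a relabelling of [n]):
   i != j adjacent iff |i - j| <= 2. *)
Definition TP (n : nat) : rel 'I_n :=
  fun i j => [&& i != j, (i <= j + 2)%N & (j <= i + 2)%N].
Arguments TP n : clear implicits.

(* Let b(W) be the total reduced Betti number of Ind(G[W]). For a vertex v of
   W, every face of Ind(G[W]) either avoids v or is v joined to a face of the
   link Ind(G[W \ N[v]]); comparing boundary ranks gives
   b(W) <= b(W - v) + b(W \ N[v]), and b(W) = 0 when v is isolated in W, as
   Ind(G[W]) is then a cone. On the suffixes {k, ..., n-1} of TP_n, splitting
   at k+2, k+3 and k, two of the four resulting pieces are cones, whence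
   b_k <= b_(k+4) + b_(k+5). Since (x + y)^4 <= 8 (x^4 + y^4) and
   8 (2 + 1) <= 2^5, induction gives b_k^4 <= 2^(n-k) from the small cases. *)

From mathcomp Require Import all_boot all_order all_algebra.
From mathcomp Require Import zify ring.
Set Implicit Arguments. Unset Strict Implicit. Unset Printing Implicit Defensive.
Import GRing.Theory Num.Theory.

Section SetMatrices.
Local Open Scope ring_scope.
Variables (K : fieldType) (V : finType).
Local Notation T := {set V}.
Local Notation N := #|{set V}|.
Implicit Types (f g : T -> T -> K) (P : pred T) (X Y : T).

(* Matrices indexed by all subsets of V: the chain groups of all induced
   subcomplexes live in this one space, so their boundary maps compose. *)
Definition setmx f : 'M[K]_N := \matrix_(i, j) f (enum_val i) (enum_val j).

Lemma setmxE f i j : setmx f i j = f (enum_val i) (enum_val j).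
Proof. by rewrite mxE. Qed.

Lemma eq_setmx f g : f =2 g -> setmx f = setmx g.
Proof. by move=> fg; apply/matrixP => i j; rewrite !mxE fg. Qed.

Lemma sum_enum_val (F : T -> K) : \sum_(i < N) F (enum_val i) = \sum_X F X.
Proof. by rewrite -(big_enum_val (A := predT)). Qed.

Lemma mul_setmx f g :
  setmx f *m setmx g = setmx (fun X Z => \sum_Y f X Y * g Y Z).
Proof.
apply/matrixP => i j; rewrite !mxE -sum_enum_val.
by apply: eq_bigr => k _; rewrite !mxE.
Qed.

Lemma trmx_setmx f : (setmx f)^T = setmx (fun X Y => f Y X).
Proof. by apply/matrixP => i j; rewrite !mxE. Qed.

Lemma sum_if_eql X0 (F : T -> K) : \sum_Y (if X0 == Y then F Y else 0) = F X0.
Proof.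
by rewrite -big_mkcond (eq_bigl (pred1 X0)) ?big_pred1_eq // => Y; rewrite eq_sym.
Qed.

Lemma sum_if_eqr X0 (F : T -> K) : \sum_Y (if Y == X0 then F Y else 0) = F X0.
Proof. by rewrite -big_mkcond big_pred1_eq. Qed.

Definition restrmx P : 'M[K]_N := setmx (fun X Y => ((X == Y) && P X)%:R).

Lemma mul_restrmx P f :
  restrmx P *m setmx f = setmx (fun X Y => if P X then f X Y else 0).
Proof.
rewrite mul_setmx; apply: eq_setmx => X Y.
rewrite -[RHS](sum_if_eql X (fun Z => if P Z then f Z Y else 0)).
by apply: eq_bigr => Z _; case: eqP => [<-|]; case: (P X); rewrite ?mul1r ?mul0r.
Qed.

Lemma mul_setmx_restr f P :
  setmx f *m restrmx P = setmx (fun X Y => if P Y then f X Y else 0).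
Proof.
rewrite mul_setmx; apply: eq_setmx => X Y.
rewrite -[RHS](sum_if_eqr Y (fun Z => if P Z then f X Z else 0)).
by apply: eq_bigr => Z _; case: eqP => [->|]; case: (P Y); rewrite ?mulr1 ?mulr0.
Qed.

Definition liftmx (v : V) (s : T -> K) : 'M[K]_N :=
  setmx (fun X A => if (v \notin X) && (A == v |: X) then s X else 0).

Lemma mul_liftmx v s f : liftmx v s *m setmx f =
  setmx (fun X B => if v \in X then 0 else s X * f (v |: X) B).
Proof.
rewrite mul_setmx; apply: eq_setmx => X B.
case: (v \in X) => /=; first by rewrite big1 // => A _; rewrite mul0r.
rewrite -[RHS](sum_if_eqr (v |: X) (fun A => s X * f A B)).
by apply: eq_bigr => A _; case: eqP; rewrite ?mul0r.
Qed.

Lemma mul_setmx_trlift f v s : setmx f *m (liftmx v s)^T =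
  setmx (fun A Y => if v \in Y then 0 else f A (v |: Y) * s Y).
Proof.
rewrite trmx_setmx mul_setmx; apply: eq_setmx => A Y.
case: (v \in Y) => /=; first by rewrite big1 // => B _; rewrite mulr0.
rewrite -[RHS](sum_if_eqr (v |: Y) (fun B => f A B * s Y)).
by apply: eq_bigr => B _; case: eqP; rewrite ?mulr0.
Qed.

Lemma sum_in_eqr (F : {set T}) X0 (G : T -> K) :
  \sum_(X in F) (X == X0)%:R * G X = if X0 \in F then G X0 else 0.
Proof.
rewrite big_mkcond (bigD1 X0) //= eqxx mul1r big1 ?addr0 // => X /negPf XX0.
by rewrite XX0 mul0r; case: ifP.
Qed.

Definition inclmx (F : {set T}) : 'M[K]_(#|F|, N) :=
  \matrix_(i, j) (enum_val i == enum_val j)%:R.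

Lemma inclmx_conj (F1 F0 : {set T}) (M : 'M[K]_(#|F1|, #|F0|)) h :
  (forall k l, M k l = h (enum_val k) (enum_val l)) ->
  (inclmx F1)^T *m M *m inclmx F0 =
  setmx (fun X Y => if (X \in F1) && (Y \in F0) then h X Y else 0).
Proof.
move=> Mh; apply/matrixP => i j; rewrite !mxE.
under eq_bigr => l _ do rewrite !mxE.
under eq_bigr => l _ do under eq_bigr => k _ do rewrite !mxE Mh.
rewrite -(big_enum_val (fun Y => (\sum_(k < #|F1|) (enum_val k == enum_val i)%:R
  * h (enum_val k) Y) * (Y == enum_val j)%:R)) /=.
under eq_bigr => Y _ do rewrite mulrC -(big_enum_val
  (fun X => (X == enum_val i)%:R * h X Y)) /= sum_in_eqr.
by rewrite sum_in_eqr; case: (enum_val i \in F1); case: (enum_val j \in F0).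
Qed.

Lemma inclmx_trK (F : {set T}) : inclmx F *m (inclmx F)^T = 1%:M.
Proof.
apply/matrixP => i j; rewrite !mxE.
under eq_bigr => k _ do rewrite !mxE.
rewrite (sum_enum_val (fun X => (enum_val i == X)%:R * (enum_val j == X)%:R)).
rewrite (bigD1 (enum_val i)) //= big1 ?addr0 => [|X]; last first.
  by rewrite eq_sym => /negPf ->; rewrite mul0r.
by rewrite eqxx mul1r (inj_eq enum_val_inj) eq_sym.
Qed.

Lemma mxrank_inclmx_conj (F1 F0 : {set T}) (M : 'M[K]_(#|F1|, #|F0|)) :
  \rank ((inclmx F1)^T *m M *m inclmx F0) = \rank M.
Proof.
apply/eqP; rewrite eqn_leq; apply/andP; split.
  exact: leq_trans (mxrankM_maxl _ _) (mxrankM_maxr _ _).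
have {1}-> : M = inclmx F1 *m ((inclmx F1)^T *m M *m inclmx F0) *m (inclmx F0)^T.
  by rewrite !mulmxA inclmx_trK mul1mx -mulmxA inclmx_trK mulmx1.
exact: leq_trans (mxrankM_maxl _ _) (mxrankM_maxr _ _).
Qed.

Lemma mxrank_restrmx (F : {set T}) : \rank (restrmx (mem F)) = #|F|.
Proof.
rewrite -[RHS](mxrank1 K) -(mxrank_inclmx_conj (1%:M : 'M_#|F|)).
rewrite (@inclmx_conj F F _ (fun X Y => (X == Y)%:R)) => [|k l]; last first.
  by rewrite !mxE (inj_eq enum_val_inj).
congr (\rank _); apply: eq_setmx => X Y /=.
by have [->|_] := eqVneq X Y; case: (X \in F); case: (Y \in F); rewrite ?eqxx.
Qed.

End SetMatrices.

Arguments restrmx {K V} P.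
Arguments inclmx {K V} F.
Arguments liftmx {K V} v s.

Section BoundaryCoefficients.
Local Open Scope ring_scope.
Variables (K : fieldType) (V : finType).
Implicit Types (X Y : {set V}) (u v : V).

Definition sgn_below v X : K :=
  (-1) ^+ #|[set x in X | enum_rank x < enum_rank v]%N|.
Definition sgn_above v X : K :=
  (-1) ^+ #|[set x in X | enum_rank v < enum_rank x]%N|.

Lemma card_setU1_pred (P : pred V) u Y : u \notin Y ->
  #|[set x in u |: Y | P x]| = (P u + #|[set x in Y | P x]|)%N.
Proof.
move=> uY; have [Pu|nPu] := boolP (P u).
  have -> : [set x in u |: Y | P x] = u |: [set x in Y | P x].
    by apply/setP => x; rewrite !inE; case: eqP => [->|].
  by rewrite cardsU1 inE (negPf uY).
rewrite add0n; apply: eq_card => x; rewrite !inE.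
by case: eqP => [->|]; rewrite ?(negPf nPu) ?andbF.
Qed.

Lemma bdry_coef_notsub X Y : ~~ (Y \subset X) -> bdry_coef K X Y = 0.
Proof. by rewrite /bdry_coef => /negPf ->. Qed.

Lemma bdry_coef_diff1 X Y u : Y \subset X -> X :\: Y = [set u] ->
  bdry_coef K X Y = sgn_below u Y.
Proof.
move=> sYX XY; rewrite /bdry_coef sYX XY.
by case: pickP => [w /set1P -> | /(_ u)]; rewrite ?set11.
Qed.

Lemma bdry_coef_cone v X : v \notin X -> bdry_coef K (v |: X) X = sgn_below v X.
Proof.
move=> vX; apply: bdry_coef_diff1; first exact: subsetUr.
by rewrite setDUl setDv setU0; apply/setDidPl; rewrite disjoints1.
Qed.

Lemma bdry_coefU1 v X Y : v \notin X -> v \notin Y -> #|X| = #|Y|.+1 ->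
  bdry_coef K (v |: X) (v |: Y) = sgn_above v X * sgn_above v Y * bdry_coef K X Y.
Proof.
move=> vX vY cardX; have [sYX|nsYX] := boolP (Y \subset X); last first.
  rewrite !bdry_coef_notsub ?mulr0 //; apply: contra nsYX => /subsetP sYX.
  apply/subsetP => y yY; have /setU1P[yv|//] := sYX y (setU1r v yY).
  by rewrite -yv yY in vY.
have /cards1P[u XY] : #|X :\: Y| == 1%N.
  by rewrite cardsD (setIidPr sYX) cardX subSnn.
have /setDP[uX uY] : u \in X :\: Y by rewrite XY set11.
have defX : X = u |: Y by rewrite -{1}(setID X Y) (setIidPr sYX) XY setUC.
have uv : u != v by apply: contraNneq vX => <-.
rewrite (@bdry_coef_diff1 _ _ u) ?setUS //; last first.
  rewrite -XY; apply/setP => x; rewrite !inE negb_or.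
  by have [->|] := eqVneq x v; rewrite ?eqxx ?(negPf vX) ?andbF.
rewrite (bdry_coef_diff1 sYX XY) /sgn_below /sgn_above defX.
rewrite !card_setU1_pred ?inE ?negb_or ?uv // !exprD -!mulrA; congr (_ * _).
by rewrite mulrA -expr2 sqrr_sign mul1r.
Qed.

End BoundaryCoefficients.

Arguments sgn_below {K V} v X.
Arguments sgn_above {K V} v X.

Section InducedFaces.
Variables (V : finType) (e : rel V).
Implicit Types (W X A : {set V}) (v : V).

Definition faces_in W (d : nat) : {set {set V}} :=
  [set A : {set V} | [&& A \subset W, independent e A & #|A| == d]].

(* W minus the closed neighbourhood of v: the link of v in Ind(G[W]) is the
   independence complex of this set. *)
Definition link W v : {set V} := [set x in W | [&& x != v, ~~ e v x & ~~ e x v]].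

Lemma independentP A :
  reflect (forall x y, x \in A -> y \in A -> ~~ e x y) (independent e A).
Proof.
apply: (iffP forall_inP) => [indA x y xA | indA x xA].
  by move/forall_inP: (indA x xA); apply.
by apply/forall_inP => y; apply: indA.
Qed.

Lemma faces_in_setT d : faces_in setT d = faces e d.
Proof. by apply/setP => A; rewrite !inE subsetT. Qed.

Lemma faces_in0 W : faces_in W 0 = [set set0].
Proof.
apply/setP => A; rewrite !inE cards_eq0.
have [-> | _] := eqVneq A set0; last by rewrite !andbF.
by rewrite sub0set andbT; apply/independentP => x y; rewrite inE.
Qed.

Lemma card_faces_in0 W : #|faces_in W 0| = 1.
Proof. by rewrite faces_in0 cards1. Qed.

Lemma faces_in_set0 d : faces_in set0 d.+1 = set0.
Proof.
apply/setP => A; rewrite !inE subset0.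
by have [->|] := eqVneq A set0; rewrite ?cards0 ?andbF.
Qed.

Lemma faces_in_setD1 W v d A :
  (A \in faces_in (W :\ v) d) = (v \notin A) && (A \in faces_in W d).
Proof. by rewrite !inE subsetD1; case: (A \subset W); case: (v \in A). Qed.

Lemma notin_faces_link W v d X : X \in faces_in (link W v) d -> v \notin X.
Proof.
rewrite inE => /and3P[/subsetP sXl _ _]; apply/negP => /sXl.
by rewrite inE eqxx andbF.
Qed.

Section Vertex.
Variables (W : {set V}) (v : V).
Hypotheses (vW : v \in W) (evv : ~~ e v v).

Lemma setU1_faces_in d X : v \notin X ->
  (v |: X \in faces_in W d.+1) = (X \in faces_in (link W v) d).
Proof.
move=> vX; rewrite !inE cardsU1 vX add1n eqSS subUset sub1set vW /=.
case: (#|X| == d); rewrite ?andbF ?andbT //.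
apply/andP/andP => [[/subsetP sXW /independentP indvX]
                   | [/subsetP sXl /independentP indX]].
  split; last first.
    by apply/independentP => x y xX yX; apply: indvX; rewrite inE ?xX ?yX orbT.
  apply/subsetP => x xX; rewrite inE sXW //= (_ : x != v); last first.
    by apply: contraNneq vX => <-.
  by rewrite !indvX ?setU11 ?inE ?xX ?orbT.
split; first by apply/subsetP => x /sXl; rewrite inE => /andP[].
have linkv x : x \in X -> ~~ e v x && ~~ e x v.
  by move/sXl; rewrite inE => /and4P[_ _ -> ->].
apply/independentP => x y /setU1P[-> | xX] /setU1P[-> | yX] //.
- by case/andP: (linkv y yX).
- by case/andP: (linkv x xX).
- exact: indX.
Qed.

Lemma card_faces_in_split d :
  #|faces_in W d.+1| = (#|faces_in (W :\ v) d.+1| + #|faces_in (link W v) d|)%N.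
Proof.
set cones := [set v |: X | X in faces_in (link W v) d].
have -> : faces_in W d.+1 = faces_in (W :\ v) d.+1 :|: cones.
  apply/setP => A; rewrite in_setU faces_in_setD1.
  have [vA|vA] /= := boolP (v \in A); last first.
    case: (A \in faces_in W d.+1) => //; apply/esym/imsetP => -[X _ AX].
    by rewrite AX setU11 in vA.
  apply/idP/imsetP => [Af | [X Xf ->]].
    by exists (A :\ v); rewrite ?setD1K // -setU1_faces_in ?setD11 ?setD1K.
  by rewrite setU1_faces_in ?(notin_faces_link Xf).
rewrite cardsU card_in_imset => [|X Y /notin_faces_link vX /notin_faces_link vY XY].
  2: by rewrite -(setU1K vX) XY setU1K.
suff -> : faces_in (W :\ v) d.+1 :&: cones = set0.
  by rewrite cards0 subn0.
apply/setP => A; rewrite in_setI faces_in_setD1 in_set0 -andbA; apply/negbTE/and3P.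
by case=> vA _ /imsetP[X _ AX]; rewrite AX setU11 in vA.
Qed.

End Vertex.
End InducedFaces.

Section InducedBoundary.
Local Open Scope ring_scope.
Variables (K : fieldType) (V : finType) (e : rel V).
Implicit Types (W X Y A B : {set V}) (v : V).
Local Notation faces_in := (faces_in e).
Local Notation link := (link e).

Definition bdry_in W d : 'M[K]_#|{set V}| :=
  setmx (fun A B => if (A \in faces_in W d.+1) && (B \in faces_in W d)
                    then bdry_coef K A B else 0).

Definition rank_in W d : nat := \rank (bdry_in W d).

(* Truncated subtraction as in [red_betti]; the argument never needs the
   identity bdry * bdry = 0. *)
Definition betti_in W d : nat :=
  (#|faces_in W d| - (if d is d'.+1 then rank_in W d' else 0) - rank_in W d)%N.

Definition btilde_in W : nat := (\sum_(d < #|V|.+2) betti_in W d)%N.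

Lemma mxrank_bdry d : \rank (bdry K e d) = rank_in setT d.
Proof.
rewrite -mxrank_inclmx_conj (@inclmx_conj _ _ _ _ _ (@bdry_coef K V)) => [|k l].
  by congr (\rank _); apply: eq_setmx => A B; rewrite !faces_in_setT.
by rewrite mxE.
Qed.

Lemma btilde_in_setT : btilde K e = btilde_in setT.
Proof.
apply: eq_bigr => -[d _] _ /=; rewrite /red_betti /betti_in !faces_in_setT.
case: d => [|d].
  by rewrite mxrank_bdry subn0.
by rewrite mxrank_ker !mxrank_bdry.
Qed.

Lemma bdry_in_setD1 W v d :
  bdry_in (W :\ v) d = restrmx (fun A => v \notin A) *m bdry_in W d.
Proof.
rewrite mul_restrmx; apply: eq_setmx => A B; rewrite !faces_in_setD1.
have [vA|vA] := boolP (v \in A); rewrite /=; first by [].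
have [vB|//] := boolP (v \in B); rewrite /= andbF.
case: ifP => // _; rewrite bdry_coef_notsub //.
by apply: contraNN vA => /subsetP; apply.
Qed.

Lemma bdry_in_setD1_restr W v d :
  bdry_in (W :\ v) d *m restrmx (fun A => v \in A) = 0.
Proof.
rewrite mul_setmx_restr; apply/matrixP => i j; rewrite setmxE mxE !faces_in_setD1.
by case: (v \in enum_val j); rewrite /= ?andbF.
Qed.

Lemma rank_in_setD1 W v d : (rank_in (W :\ v) d <= rank_in W d)%N.
Proof. by rewrite /rank_in bdry_in_setD1 mxrankM_maxr. Qed.

Section Vertex.
Variables (W : {set V}) (v : V).
Hypotheses (vW : v \in W) (evv : ~~ e v v).

(* Signed coning with v commutes with the boundary and embeds the chains of the
   link into the chains of W containing v. *)
Lemma bdry_in_link d : bdry_in (link W v) d =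
  liftmx v (sgn_above v) *m (bdry_in W d.+1 *m restrmx (fun A => v \in A))
    *m (liftmx v (sgn_above v))^T.
Proof.
rewrite mul_setmx_restr mul_liftmx mul_setmx_trlift; apply: eq_setmx => X Y.
rewrite setU11.
have [vX|vX] := boolP (v \in X).
  rewrite mul0r if_same; case: ifP => // /andP[Xf _].
  by case/negP: (notin_faces_link Xf).
have [vY|vY] /= := boolP (v \in Y).
  case: ifP => // /andP[_ Yf].
  by case/negP: (notin_faces_link Yf).
rewrite !setU1_faces_in //.
case: ifP => [/andP[]|]; last by rewrite mulr0 mul0r.
rewrite !inE => /and3P[_ _ /eqP cardX] /and3P[_ _ /eqP cardY].
have sgn2 Z : sgn_above v Z * sgn_above v Z = 1 :> K by rewrite -expr2 sqrr_sign.
by rewrite bdry_coefU1 ?cardX ?cardY // !mulrA sgn2 mul1r mulrAC sgn2 mul1r.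
Qed.

Lemma rank_in_split d :
  (rank_in (W :\ v) d.+1 + rank_in (link W v) d <= rank_in W d.+1)%N.
Proof.
rewrite /rank_in -(mxrank_mul_ker (bdry_in W d.+1) (restrmx (fun A => v \in A))) addnC.
apply: leq_add.
  by rewrite bdry_in_link; apply: leq_trans (mxrankM_maxl _ _) (mxrankM_maxr _ _).
apply: mxrankS; rewrite sub_capmx {1}bdry_in_setD1 submxMl.
by apply/sub_kermxP; rewrite bdry_in_setD1_restr.
Qed.

Hypothesis v_isolated : link W v = W :\ v.

(* On faces of W - v the boundary undoes coning with the isolated vertex v. *)
Lemma bdry_in_cone_section d (F := faces_in (W :\ v) d) :
  liftmx v (sgn_below v) *m bdry_in W d *m restrmx (mem F) = restrmx (mem F).
Proof.
rewrite mul_liftmx mul_setmx_restr; apply: eq_setmx => X Y /=.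
have [YF|nYF] := boolP (Y \in F); last first.
  by have [->|] := eqVneq X Y; rewrite ?(negPf nYF).
move: (YF); rewrite faces_in_setD1 => /andP[vY Yf].
have [->|XY] := eqVneq X Y.
  rewrite (negPf vY) Yf andbT setU1_faces_in // v_isolated YF.
  by rewrite bdry_coef_cone // -expr2 sqrr_sign.
have [//|vX] := boolP (v \in X); rewrite Yf andbT setU1_faces_in // v_isolated.
case: ifP => [XF|]; last by rewrite mulr0.
rewrite bdry_coef_notsub ?mulr0 //; apply: contra XY => sYvX.
rewrite eq_sym eqEcard; apply/andP; split.
  apply/subsetP => y yY; have /setU1P[yv|//] := subsetP sYvX y yY.
  by rewrite -yv yY in vY.
by move: XF Yf; rewrite !inE => /and3P[_ _ /eqP->] /and3P[_ _ /eqP->].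
Qed.

Lemma card_faces_in_cone d : (#|faces_in (W :\ v) d| <= rank_in W d)%N.
Proof.
rewrite /rank_in -(mxrank_restrmx K) -(bdry_in_cone_section d).
exact: leq_trans (mxrankM_maxl _ _) (mxrankM_maxr _ _).
Qed.

End Vertex.
End InducedBoundary.

Section ReducedBettiNumbers.
Variables (K : fieldType) (V : finType) (e : rel V).
Local Notation betti_in := (betti_in K e).
Local Notation btilde_in := (btilde_in K e).
Local Notation link := (link e).

Lemma btilde_in_set0 : btilde_in set0 <= 1.
Proof.
rewrite /btilde_in big_ord_recl big1 => [|d _].
  by rewrite /betti_in card_faces_in0 addn0 leq_subr.
by rewrite /betti_in faces_in_set0 cards0.
Qed.

Section Vertex.
Variables (W : {set V}) (v : V).
Hypotheses (vW : v \in W) (evv : ~~ e v v).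

Lemma betti_in_split d : betti_in W d <=
  betti_in (W :\ v) d + (if d is d'.+1 then betti_in (link W v) d' else 0).
Proof.
have le_del := rank_in_setD1 K e W v; rewrite /betti_in.
case: d => [|d]; first by have := le_del 0; rewrite !card_faces_in0; lia.
rewrite (card_faces_in_split vW evv); have := le_del d.+1.
have := rank_in_split K vW evv d.
case: d => [|d]; first by have := le_del 0; rewrite !card_faces_in0; lia.
by have := rank_in_split K vW evv d; lia.
Qed.

Lemma btilde_in_split : btilde_in W <= btilde_in (W :\ v) + btilde_in (link W v).
Proof.
rewrite /btilde_in; apply: (@leq_trans (\sum_(d < #|V|.+2) (betti_in (W :\ v) d
  + if (d : nat) is d'.+1 then betti_in (link W v) d' else 0)%N)).
  by apply: leq_sum => d _; apply: betti_in_split.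
rewrite big_split leq_add2l [X in X <= _]big_ord_recl /= add0n.
by rewrite [X in _ <= X]big_ord_recr leq_addr.
Qed.

Lemma btilde_in_cone : link W v = W :\ v -> btilde_in W = 0.
Proof.
move=> v_isolated; apply: big1 => -[d _] _ /=.
have cone := card_faces_in_cone K vW evv v_isolated; rewrite /betti_in.
case: d => [|d]; first by have := cone 0; rewrite !card_faces_in0; lia.
rewrite (card_faces_in_split vW evv) v_isolated.
by have := cone d; have := cone d.+1; lia.
Qed.

End Vertex.
End ReducedBettiNumbers.

Section TriangularPath.
Variables (K : fieldType) (n : nat).

Definition suffix k : {set 'I_n} := [set i : 'I_n | k <= i].
Definition btilde_suffix k : nat := btilde_in K (TP n) (suffix k).

Local Notation b := btilde_suffix.
Local Notation bt := (btilde_in K (TP n)).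
Local Notation link := (link (TP n)).

Lemma TP_irrefl v : ~~ TP n v v.
Proof. by rewrite /TP eqxx. Qed.

Ltac tp_lia := rewrite ?inE /TP -?val_eqE /=; lia.
Ltac tp_setP := apply/setP => x; have := ltn_ord x; rewrite !inE /TP -?val_eqE /=; lia.

Lemma btilde_TP : btilde K (TP n) = b 0.
Proof. by rewrite btilde_in_setT /b /suffix; congr bt. Qed.

Lemma btilde_suffix_empty k : n <= k -> b k <= 1.
Proof.
by move=> nk; rewrite /b (_ : suffix k = set0); [exact: btilde_in_set0 | tp_setP].
Qed.

Lemma btilde_suffix_last k (kn : k.+1 = n) : b k = 0.
Proof.
have lt_kn : k < n by rewrite kn.
apply: (@btilde_in_cone _ _ _ _ (Ordinal lt_kn)).
- by tp_lia.
- exact: TP_irrefl.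
- by tp_setP.
Qed.

Lemma btilde_suffix_rec1 k (kn : k < n) : b k <= b k.+1 + b (k + 3).
Proof.
have := @btilde_in_split K _ (TP n) (suffix k) (Ordinal kn).
rewrite inE leqnn TP_irrefl => /(_ isT isT).
rewrite (_ : suffix k :\ Ordinal kn = suffix k.+1); last by tp_setP.
by rewrite (_ : link (suffix k) (Ordinal kn) = suffix (k + 3)); last by tp_setP.
Qed.

(* Deleting k+2, then k+3, then k leaves the links suffix (k+5), a cone with
   apex k, and suffix (k+4); the last deletion leaves a cone with apex k+1. *)
Lemma btilde_suffix_rec4 k (kn : k + 3 < n) : b k <= b (k + 4) + b (k + 5).
Proof.
have lt j : j <= 3 -> k + j < n by lia.
pose v j (j3 : j <= 3) := Ordinal (lt j j3).
have splitW j j3 (W : {set 'I_n}) :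
    v j j3 \in W -> bt W <= bt (W :\ v j j3) + bt (link W (v j j3)).
  by move=> vW; apply: btilde_in_split; rewrite ?TP_irrefl.
have coneW j j3 (W : {set 'I_n}) :
    v j j3 \in W -> link W (v j j3) = W :\ v j j3 -> bt W = 0.
  by move=> vW; apply: btilde_in_cone; rewrite ?TP_irrefl.
set H := suffix k :\ v 2 isT; set H' := H :\ v 3 isT.
have le2 : b k <= bt H + b (k + 5).
  have linkW : link (suffix k) (v 2 isT) = suffix (k + 5) by tp_setP.
  by rewrite /b -linkW; apply: splitW; tp_lia.
have le3 : bt H <= bt H'.
  have cone_link : bt (link H (v 3 isT)) = 0.
    by apply: (coneW 0 isT); [tp_lia | tp_setP].
  by have := splitW 3 isT H; rewrite cone_link addn0; apply; tp_lia.
have le0 : bt H' <= b (k + 4).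
  have cone_del : bt (H' :\ v 0 isT) = 0.
    by apply: (coneW 1 isT); [tp_lia | tp_setP].
  have linkH' : link H' (v 0 isT) = suffix (k + 4) by tp_setP.
  by have := splitW 0 isT H'; rewrite cone_del linkH'; apply; tp_lia.
by apply: leq_trans le2 _; rewrite leq_add2r (leq_trans le3 le0).
Qed.

End TriangularPath.

Lemma leq_exp4D x y : (x + y) ^ 4 <= 8 * (x ^ 4 + y ^ 4).
Proof.
wlog le_yx : x y / y <= x.
  by move=> le; case: (leqP y x) => [/le//|/ltnW/le]; rewrite addnC [y ^ 4 + _]addnC.
rewrite -(subnK le_yx); move: (x - y) => t.
have -> : 8 * ((t + y) ^ 4 + y ^ 4) =
  (t + y + y) ^ 4 + (24 * y * y * t * t + 24 * y * t * t * t + 7 * t * t * t * t).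
  by ring.
exact: leq_addr.
Qed.

Section TriangularPathBounds.
Variables (K : fieldType) (n : nat).
Local Notation b := (btilde_suffix K n).

Definition btilde_suffix_table : seq nat := [:: 1; 0; 1; 2; 2; 1; 1; 3; 4].

Lemma btilde_suffix_small m k : k + m = n -> m <= 8 ->
  b k <= nth 0 btilde_suffix_table m.
Proof.
elim/ltn_ind: m k => m IH k km m8.
have IHb j c : j < m -> k + c + j = n -> b (k + c) <= nth 0 btilde_suffix_table j.
  by move=> jm kcj; apply: IH => //; lia.
have empty c : n <= k + c -> b (k + c) <= 1 by apply: btilde_suffix_empty.
have rec1 : k < n -> b k <= b (k + 1) + b (k + 3).
  by rewrite addn1; apply: btilde_suffix_rec1.
have rec4 := @btilde_suffix_rec4 K n k.
case: m IH IHb km m8 => [|[|[|[|[|[|[|[|[|//]]]]]]]]] IH IHb km _ /=.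
- by apply: btilde_suffix_empty; lia.
- by rewrite btilde_suffix_last //; lia.
- by have /= := IHb 1 1; have := empty 3; have := rec1; lia.
- by have /= := IHb 2 1; have /= := IHb 0 3; have := rec1; lia.
- by have /= := IHb 0 4; have := empty 5; have := rec4; lia.
- by have /= := IHb 1 4; have /= := IHb 0 5; have := rec4; lia.
- by have /= := IHb 2 4; have /= := IHb 1 5; have := rec4; lia.
- by have /= := IHb 3 4; have /= := IHb 2 5; have := rec4; lia.
- by have /= := IHb 4 4; have /= := IHb 3 5; have := rec4; lia.
Qed.

Lemma btilde_suffix_bound m k : k + m = n -> m != 3 -> b k ^ 4 <= 2 ^ m.
Proof.
elim/ltn_ind: m k => m IH k km m3.
have [m8|m9] := leqP m 8.
  have table_ok : nth 0 btilde_suffix_table m ^ 4 <= 2 ^ m.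
    by case: m {IH km} m3 m8 => [|[|[|[|[|[|[|[|[|//]]]]]]]]].
  by apply: leq_trans table_ok; rewrite leq_exp2r // btilde_suffix_small.
have IH4 := IH (m - 4) _ (k + 4); have IH5 := IH (m - 5) _ (k + 5).
have {IH4 IH5} [le4 le5] : b (k + 4) ^ 4 <= 2 ^ (m - 4) /\ b (k + 5) ^ 4 <= 2 ^ (m - 5).
  by split; [apply: IH4 | apply: IH5]; lia.
have le_sum : b k ^ 4 <= (b (k + 4) + b (k + 5)) ^ 4.
  by rewrite leq_exp2r // btilde_suffix_rec4 //; lia.
have := leq_exp4D (b (k + 4)) (b (k + 5)).
have -> : 2 ^ m = 2 ^ (m - 5) * 32 by rewrite -(expnD 2 _ 5) subnK //; lia.
have e4 : 2 ^ (m - 4) = 2 ^ (m - 5) * 2 by rewrite -expnSr; congr (2 ^ _); lia.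
move: le_sum le4 le5; rewrite e4.
move: (b k ^ 4) (b (k + 4) ^ 4) (b (k + 5) ^ 4) ((_ + _) ^ 4) (2 ^ (m - 5)); lia.
Qed.

End TriangularPathBounds.

Section SmallFaces.
Variables (V : finType) (e : rel V).

Lemma card_faces1 : irreflexive e -> #|faces e 1| = #|V|.
Proof.
move=> eirr; have -> : faces e 1 = [set [set x] | x : V].
  apply/setP => A; rewrite !inE; apply/andP/imsetP => [[_ /cards1P[x ->]] | [x _ ->]].
    by exists x.
  rewrite cards1; split=> //.
  by apply/independentP => y z /set1P-> /set1P->; rewrite eirr.
by rewrite card_imset //; apply: set1_inj.
Qed.

Lemma faces2_complete : (forall x y, x != y -> e x y) -> faces e 2 = set0.
Proof.
move=> ecomplete; apply/setP => A; rewrite !inE; apply/negbTE/andP.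
case=> /independentP indA /cards2P[x [y [xy defA]]].
by have := indA x y; rewrite defA !inE !eqxx orbT ecomplete // => /(_ isT isT).
Qed.

End SmallFaces.

Lemma btilde_TP3 (K : fieldType) : btilde K (TP 3) = 2.
Proof.
apply/eqP; rewrite eqn_leq; apply/andP; split.
  by rewrite btilde_TP (@btilde_suffix_small K 3 3 0).
have c0 : #|faces (TP 3) 0| = 1 by rewrite -faces_in_setT card_faces_in0.
have c1 : #|faces (TP 3) 1| = 3.
  by rewrite card_faces1 ?card_ord // => x; apply/negbTE/TP_irrefl.
have c2 : #|faces (TP 3) 2| = 0.
  rewrite faces2_complete ?cards0 // => x y xy.
  by rewrite /TP xy /=; have := ltn_ord x; have := ltn_ord y; lia.
rewrite /btilde (bigD1 (Ordinal (_ : 1 < #|'I_3|.+2))) //= /red_betti mxrank_ker.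
apply: leq_trans (leq_addr _ _).
have := rank_leq_col (bdry K (TP 3) 0); have := rank_leq_row (bdry K (TP 3) 1).
move: (\rank (bdry K (TP 3) 0)) (\rank (bdry K (TP 3) 1)) => r0 r1.
by rewrite c0 c1 c2; lia.
Qed.

Theorem lemmaA20 (K : fieldType) :
  (forall n : nat, n != 3 -> (btilde K (TP n) ^ 4 <= 2 ^ n)%N)
  /\ btilde K (TP 3) = 2%N.
Proof.
split; last exact: btilde_TP3.
by move=> n n3; rewrite btilde_TP; apply: btilde_suffix_bound.
Qed.
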